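(* Let $j\ge2$, let $H$ be a graph, let $G=\mathsf{TS}_j(H)$, and let $x_Q$ be the vertex of $G$ corresponding to a $j$-clique $Q=\{a_1,\dots,a_j\}$ of $H$. Put $S:=\bigcap_{i=1}^j N_H(a_i)$ and $X:=H[S]$. Then the subgraph of $G$ induced by the neighborhood $N_G(x_Q)$ is isomorphic to the graph obtained from $j$ disjoint copies $X_1,\dots,X_j$ of $X$ (writing $s_i$ for the copy of $s\in S$ in $X_i$) by adding, for each $s\in S$, all edges among $s_1,\dots,s_j$; there are no other edges between different copies.
   Context: All graphs are finite, simple, undirected; $N_H(v)$ is the set of neighbors of $v$ in $H$ and $H[S]$ the induced subgraph. A $k$-clique of a graph $H$ is a set of $k$ pairwise adjacent vertices. For a graph $H$ and integer $k\ge1$, the Token Sliding graph $\mathsf{TS}_k(H)$ has as vertices the $k$-cliques of $H$, and two $k$-cliques $A,B$ are adjacent iff $A\setminus B=\{u\}$, $B\setminus A=\{v\}$ for some vertices $u,v$ with $uv\in E(H)$. *)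

(* A simple graph H is a finType T with a symmetric,
   irreflexive adjacency relation e : rel T. *)
From mathcomp Require Import all_boot.
Set Implicit Arguments. Unset Strict Implicit. Unset Printing Implicit Defensive.

Definition is_clique (T : finType) (e : rel T) (k : nat) (A : {set T}) : bool :=
  (#|A| == k) && [forall x in A, forall y in A, (x != y) ==> e x y].

Definition ts_adj (T : finType) (e : rel T) (A B : {set T}) : bool :=
  [exists u, exists v, [&& A :\: B == [set u], B :\: A == [set v] & e u v]].

Definition ts_vertices (T : finType) (e : rel T) (k : nat) : {set {set T}} :=
  [set A | is_clique e k A].

Definition ts_nbhd (T : finType) (e : rel T) (k : nat) (Q : {set T}) : {set {set T}} :=
  [set B in ts_vertices e k | ts_adj e Q B].

Definition nbhd (T : finType) (e : rel T) (v : T) : {set T} := [set w | e v w].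

Definition common_nbhd (T : finType) (e : rel T) (Q : {set T}) : {set T} :=
  \bigcap_(a in Q) nbhd e a.

(* Edges of the graph on k disjoint copies of X = H[S]: vertex (s,i) is the
   copy s_i of s in X_i; edges inside a copy are those of X, and s_i ~ s_l
   for i <> l; no other edges. *)
Definition copies_adj (T : finType) (e : rel T) (k : nat) (p q : T * 'I_k) : bool :=
  ((p.2 == q.2) && e p.1 q.1) || ((p.1 == q.1) && (p.2 != q.2)).

From mathcomp Require Import all_boot.
Set Implicit Arguments. Unset Strict Implicit. Unset Printing Implicit Defensive.

(* Every neighbour of Q in TS_j(H) is an exchange Q - u + v with u in Q and v
   adjacent to all of Q, i.e. v in S; it is sent to the copy v_i of v, where i
   labels u.  Two exchanges are adjacent iff they remove the same u and add
   adjacent vertices v (an edge inside one copy of X), or add the same v and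
   remove different vertices of Q, which are adjacent because Q is a clique
   (an edge between two copies of v).  If both differ, each exchange has two
   vertices the other lacks, so they are not adjacent. *)

Section Exchange.
Variable T : finType.
Implicit Types (Q A B : {set T}) (u v x : T).

Definition exchange Q u v : {set T} := v |: (Q :\ u).

Lemma exchangeDl Q u v : u \in Q -> v \notin Q -> exchange Q u v :\: Q = [set v].
Proof.
move=> uQ vQ; apply/setP => x; rewrite !inE.
by have [->|] := eqVneq x v; [rewrite (negbTE vQ)|case: (x \in Q); rewrite ?andbF].
Qed.

Lemma exchangeDr Q u v : u \in Q -> v \notin Q -> Q :\: exchange Q u v = [set u].
Proof.
move=> uQ vQ; apply/setP => x; rewrite !inE.
have [->|_] := eqVneq x u; last by case: (x \in Q); rewrite /= ?andbF ?orbT.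
by rewrite uQ andbT orbF; apply: contraNneq vQ => <-.
Qed.

Lemma exchangeD Q u1 u2 v1 v2 :
  u1 \in Q -> u2 \in Q -> v1 \notin Q -> v2 \notin Q ->
  exchange Q u1 v1 :\: exchange Q u2 v2 =
  (if v1 == v2 then set0 else [set v1]) :|: (if u1 == u2 then set0 else [set u2]).
Proof.
move=> u1Q u2Q v1Q v2Q; apply/setP => x.
rewrite !inE !(fun_if (fun X : {set T} => x \in X)) !inE.
have [->|xv1] := eqVneq x v1.
  have v1u2 : v1 != u2 by apply: contraNneq v1Q => ->.
  by rewrite (negbTE v1Q) !andbF !orbF (negbTE v1u2); case: eqVneq; case: ifP.
have [->|xu2] := eqVneq x u2.
  have u2v2 : u2 != v2 by apply: contraNneq v2Q => <-.
  by rewrite u2Q (negbTE u2v2) !if_same eq_sym; case: eqVneq.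
by rewrite !if_same; case: (x \in Q); rewrite /= ?andbF ?orbT.
Qed.

Lemma exchange_setD Q B u v : Q :\: B = [set u] -> B :\: Q = [set v] -> B = exchange Q u v.
Proof.
move=> dQB dBQ; rewrite /exchange -{1}(setID B Q) -dBQ setUC; congr (_ :|: _).
by rewrite -dQB setDDr setDv set0U setIC.
Qed.

End Exchange.

Section TokenSlidingNeighbourhood.
Variables (T : finType) (e : rel T).
Hypotheses (e_sym : symmetric e) (e_irr : irreflexive e).
Implicit Types (Q A B : {set T}) (a b u v x y : T).

Lemma clique_adj k A x y : is_clique e k A -> x \in A -> y \in A -> x != y -> e x y.
Proof. by case/andP=> _ /forall_inP cliqueA /cliqueA/forall_inP adjx /adjx/implyP. Qed.

Lemma common_nbhdP Q v : reflect {in Q, forall a, e a v} (v \in common_nbhd e Q).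
Proof. by apply: (iffP bigcapP) => adj a /adj; rewrite inE. Qed.

Lemma common_nbhd_notin Q v : v \in common_nbhd e Q -> v \notin Q.
Proof. by move/common_nbhdP=> adj; apply: contraTN isT => /adj; rewrite e_irr. Qed.

Lemma ts_adj_set1 A B a b : A :\: B = [set a] -> B :\: A = [set b] -> ts_adj e A B = e a b.
Proof.
rewrite /ts_adj => -> ->; apply/existsP/idP => [[u /existsP[v]]|eab].
  by case/and3P=> /eqP/set1_inj<- /eqP/set1_inj<-.
by exists a; apply/existsP; exists b; rewrite !eqxx.
Qed.

Lemma ts_adj_setD_not1 A B : (forall w, A :\: B != [set w]) -> ts_adj e A B = false.
Proof.
move=> not1; apply/negbTE/existsP => -[u /existsP[v /and3P[dAB _ _]]].
by move: (not1 u); rewrite dAB.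
Qed.

Lemma exchange_clique k Q u v : is_clique e k Q -> u \in Q -> v \in common_nbhd e Q ->
  is_clique e k (exchange Q u v).
Proof.
move=> cliqueQ uQ vS; have vQ := common_nbhd_notin vS.
case/andP: (cliqueQ) => /eqP cardQ _; apply/andP; split.
  by rewrite cardsU1 !inE (negbTE vQ) andbF -cardQ (cardsD1 u Q) uQ.
apply/forall_inP => x xX; apply/forall_inP => y yX; apply/implyP.
move: xX yX; rewrite !inE => /predU1P[->|/andP[_ xQ]] /predU1P[->|/andP[_ yQ]].
- by rewrite eqxx.
- by rewrite e_sym (common_nbhdP _ _ vS).
- by rewrite (common_nbhdP _ _ vS).
- exact: clique_adj cliqueQ xQ yQ.
Qed.

Lemma ts_nbhdP j Q B : is_clique e j Q ->
  reflect (exists2 u, u \in Q & exists2 v, v \in common_nbhd e Q & B = exchange Q u v)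
          (B \in ts_nbhd e j Q).
Proof.
move=> cliqueQ; apply: (iffP idP).
  rewrite !inE => /andP[cliqueB /existsP[u /existsP[v /and3P[/eqP dQB /eqP dBQ euv]]]].
  have /setDP[uQ _] : u \in Q :\: B by rewrite dQB set11.
  have /setDP[vB vQ] : v \in B :\: Q by rewrite dBQ set11.
  have defB := exchange_setD dQB dBQ.
  exists u => //; exists v => //; apply/common_nbhdP => a aQ.
  have [->//|au] := eqVneq a u.
  apply: (clique_adj cliqueB _ vB); first by rewrite defB !inE au aQ orbT.
  by apply: contraNneq vQ => <-.
case=> u uQ [v vS ->]; have vQ := common_nbhd_notin vS.
rewrite !inE exchange_clique // (ts_adj_set1 (exchangeDr uQ vQ) (exchangeDl uQ vQ)).
exact: (common_nbhdP _ _ vS).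
Qed.

Lemma ts_adj_exchange k Q u1 u2 v1 v2 : is_clique e k Q ->
  u1 \in Q -> u2 \in Q -> v1 \in common_nbhd e Q -> v2 \in common_nbhd e Q ->
  ts_adj e (exchange Q u1 v1) (exchange Q u2 v2) =
  ((u1 == u2) && e v1 v2) || ((v1 == v2) && (u1 != u2)).
Proof.
move=> cliqueQ u1Q u2Q v1S v2S.
have v1Q := common_nbhd_notin v1S; have v2Q := common_nbhd_notin v2S.
move: (exchangeD u1Q u2Q v1Q v2Q) (exchangeD u2Q u1Q v2Q v1Q).
have [<-|v12] := eqVneq v1 v2; have [<-|u12] := eqVneq u1 u2 => /= D12 D21.
- rewrite e_irr ts_adj_setD_not1 // => w.
  by rewrite setDv eq_sym; apply/set0Pn; exists w; exact: set11.
- by rewrite !set0U in D12 D21; rewrite (ts_adj_set1 D12 D21) (clique_adj cliqueQ) // eq_sym.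
- by rewrite !setU0 in D12 D21; rewrite (ts_adj_set1 D12 D21) orbF.
- have v1u2 : v1 != u2 by apply: contraNneq v1Q => ->.
  rewrite ts_adj_setD_not1 // => w; apply/eqP => D12w.
  by have := cards2 v1 u2; rewrite -D12 D12w cards1 v1u2.
Qed.

Section Coordinates.
Variables (j : nat) (Q : {set T}) (lab : T -> 'I_j) (x0 : T).
Hypotheses (cliqueQ : is_clique e j Q) (lab_inj : {in Q &, injective lab}).
Hypothesis lab_onto : forall i, exists2 u, u \in Q & lab u = i.

Definition exchange_coord B : T * 'I_j :=
  (odflt x0 [pick v in B :\: Q], lab (odflt x0 [pick u in Q :\: B])).

Lemma exchange_coordE u v : u \in Q -> v \in common_nbhd e Q ->
  exchange_coord (exchange Q u v) = (v, lab u).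
Proof.
move=> uQ /common_nbhd_notin vQ.
by rewrite /exchange_coord exchangeDl // exchangeDr // !pick_set1.
Qed.

Lemma ts_nbhd_coordinates :
  [/\ {in ts_nbhd e j Q &, injective exchange_coord},
      exchange_coord @: ts_nbhd e j Q = [set p | p.1 \in common_nbhd e Q]
    & {in ts_nbhd e j Q &, forall A B,
         ts_adj e A B = copies_adj e (exchange_coord A) (exchange_coord B)}].
Proof.
split.
- move=> A B /(ts_nbhdP _ cliqueQ)[u1 u1Q [v1 v1S ->]] /(ts_nbhdP _ cliqueQ)[u2 u2Q [v2 v2S ->]].
  by rewrite !exchange_coordE // => -[-> /lab_inj->].
- apply/setP => -[v i]; rewrite inE /=; apply/imsetP/idP => [[B]|vS].
    by case/(ts_nbhdP _ cliqueQ) => u uQ [v' vS ->]; rewrite exchange_coordE // => -[->].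
  have [u uQ <-] := lab_onto i; exists (exchange Q u v); last by rewrite exchange_coordE.
  by apply/(ts_nbhdP _ cliqueQ); exists u => //; exists v.
- move=> A B /(ts_nbhdP _ cliqueQ)[u1 u1Q [v1 v1S ->]] /(ts_nbhdP _ cliqueQ)[u2 u2Q [v2 v2S ->]].
  by rewrite !exchange_coordE // (ts_adj_exchange cliqueQ) // /copies_adj /= (inj_in_eq lab_inj).
Qed.

End Coordinates.

End TokenSlidingNeighbourhood.

Theorem lemma3p15 (T : finType) (e : rel T)
  (e_sym : symmetric e) (e_irr : irreflexive e)
  (j : nat) (hj : 2 <= j) (Q : {set T}) (hQ : is_clique e j Q) :
  exists f : {set T} -> T * 'I_j,
    [/\ {in ts_nbhd e j Q &, injective f},
        f @: ts_nbhd e j Q = [set p | p.1 \in common_nbhd e Q]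
      & {in ts_nbhd e j Q &, forall A B,
           ts_adj e A B = copies_adj e (f A) (f B)}].
Proof.
have cardQ : #|Q| = j by case/andP: hQ => /eqP.
have [x0 x0Q] : exists x0, x0 \in Q by apply/card_gt0P; rewrite cardQ ltnW.
subst j; exists (exchange_coord Q (enum_rank_in x0Q) x0).
apply: ts_nbhd_coordinates => //; first exact: can_in_inj (enum_rankK_in x0Q).
by move=> i; exists (enum_val i); rewrite ?enum_valP ?enum_valK_in.
Qed.
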